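(* Let $N=\begin{pmatrix}0&1&0\\0&0&1\\0&0&0\end{pmatrix}$, $\xi=(x,y,z)^T$, $\beta=2zx-y^2$, and $d\ge1$. The space $\ker(\mathrm{ad}_{N^*})\cap U^3_d$ equals $\{\theta\,\xi:\ \theta=\theta(x,\beta)\in P^3_{d-1}\}$, i.e. the vector fields $\theta\xi$ with $\theta$ a homogeneous degree-$(d-1)$ polynomial in $\xi$ that is a polynomial in $x$ and $\beta$. This space has dimension $\lceil d/2\rceil$.
   Context: $P^3_k$ is the space of real homogeneous polynomials of degree $k$ on $\mathbb{R}^3$; $U^3_d=\{\theta(\xi)\xi:\theta\in P^3_{d-1}\}$. $\mathrm{ad}_A h(\xi)=Dh(\xi)A\xi-Ah(\xi)$, $N^*=N^T$; $\ker\mathrm{ad}_{N^*}$ is the orthogonal complement of $\mathrm{rng}\,\mathrm{ad}_N$ with respect to the inner product $\langle p,q\rangle=\sum_i p_i(\partial_\xi)q_i(\xi)|_{\xi=0}$. *)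

From HB Require Import structures.
From mathcomp Require Import all_boot all_order all_algebra.
From mathcomp Require Import reals.
From mathcomp Require Import mpoly.
Set Implicit Arguments. Unset Strict Implicit. Unset Printing Implicit Defensive.
Import Order.TTheory GRing.Theory Num.Theory.
Local Open Scope ring_scope.

(* Coordinates: xi = (x,y,z) = ('X_0,'X_1,'X_2). *)
Definition vf (R : realType) := {ffun 'I_3 -> {mpoly R[3]}}.

Definition xi (R : realType) : vf R := [ffun i => 'X_i].

(* the nilpotent matrix N (ones on the superdiagonal) and N^* = N^T *)
Definition Nmat (R : realType) : 'M[R]_3 :=
  \matrix_(i, j) (if nat_of_ord j == (nat_of_ord i).+1 then 1 else 0).

Definition ad (R : realType) (A : 'M[R]_3) (h : vf R) : vf R :=
  [ffun i => \sum_(j < 3) mderiv j (h i) * (\sum_(k < 3) (A j k) *: 'X_k)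
             - \sum_(j < 3) (A i j) *: h j].

Definition U3 (R : realType) (d : nat) (h : vf R) : Prop :=
  exists theta : {mpoly R[3]},
    theta \is (d.-1).-homog /\ h = [ffun i => theta * 'X_i].

Definition ker_adNstar (R : realType) (h : vf R) : Prop :=
  ad (Nmat R)^T h = 0.

Definition beta (R : realType) : {mpoly R[3]} :=
  2%:R * ('X_2 * 'X_0) - 'X_1 ^+ 2.

Definition poly_in_x_beta (R : realType) (theta : {mpoly R[3]}) : Prop :=
  exists q : {mpoly R[2]}, theta = q \mPo [tuple ('X_0 : {mpoly R[3]}); beta R].

From HB Require Import structures.
From mathcomp Require Import all_boot all_order all_algebra.
From mathcomp Require Import reals.
From mathcomp Require Import mpoly.
From mathcomp Require Import ring zify.
Import Order.TTheory GRing.Theory Num.Theory.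
Local Open Scope ring_scope.

(* ad_{N^*}(theta xi) = (D theta) xi with D = x d/dy + y d/dz a derivation, so
   the problem reduces to the homogeneous kernel of D.  D kills x and
   beta = 2zx - y^2, hence every polynomial in x and beta.  Conversely, the
   coefficient identities of D p = 0 force p to vanish once its coefficients
   on the monomials x^a y^(2k) vanish; since x^(m-2j) beta^j has coefficient
   (-1)^j on x^(m-2j) y^(2j) and 0 on the other such monomials, subtracting
   the matching combination of these ceil(d/2) invariants from p leaves 0,
   and the same coefficients show that the invariants are independent. *)

Local Notation I0 := (0%R : 'I_3).
Local Notation I1 := (1%R : 'I_3).
Local Notation I2 := (2%R : 'I_3).

Lemma mpolyXU_homog {n} {R : nzRingType} (i : 'I_n) :
  ('X_i : {mpoly R[n]}) \is 1.-homog.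
Proof. by rewrite dhomogX /= mdeg1. Qed.

Lemma mderivXU n (R : nzRingType) (i j : 'I_n) :
  ('X_i : {mpoly R[n]})^`M(j) = (i == j)%:R.
Proof.
rewrite mderivX mnm1E; case: eqP => [->|_]; last by rewrite scale0r.
suff -> : (U_(j) - U_(j) = 0)%MM by rewrite mpolyX0 scale1r.
by apply/mnmP=> k; rewrite mnmBE mnm0E subnn.
Qed.

Lemma mcoeffMXU (n : nat) (R : nzRingType) (p : {mpoly R[n]}) (i : 'I_n) m :
  (p * 'X_i)@_m = if (0 < m i)%N then p@_(m - U_(i)) else 0.
Proof.
case: ifP => [m_i_gt0 | /negbT]; last first.
  rewrite -leqNgt leqn0 => /eqP m_i0; apply/eqP; rewrite mcoeff_eq0.
  apply/negP; rewrite (perm_mem (msuppMX _ _)) => /mapP [m' _ def_m].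
  by move: m_i0; rewrite def_m mnmDE mnm1E eqxx.
suff {1}-> : m = (U_(i) + (m - U_(i)))%MM by rewrite mcoeffMX.
by apply/mnmP=> j; rewrite mnmDE mnmBE mnm1E; case: eqP => [<-|] /=; lia.
Qed.

Ltac mnm3_tac := apply/mnmP; case => [[|[|[|]]] ?];
  rewrite ?(mnmDE, mnmBE, mnm1E, mnmE, mulmnE) //=; lia.

Definition mnm3 (a b c : nat) : 'X_{1..3} := [multinom nth 0%N [:: a; b; c] i | i < 3].

Lemma mnm3_eta (m : 'X_{1..3}) : m = mnm3 (m I0) (m I1) (m I2).
Proof.
by apply/mnmP=> -[[|[|[|//]]] lt_i3]; rewrite mnmE //=; congr (m _); apply/val_inj.
Qed.

Lemma mdeg_mnm3 a b c : mdeg (mnm3 a b c) = (a + b + c)%N.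
Proof. by rewrite mdegE !big_ord_recr big_ord0 /= !mnmE /= add0n. Qed.

Lemma mnm3_subU0 a b c : (mnm3 a b c - U_(I0))%MM = mnm3 a.-1 b c.
Proof. mnm3_tac. Qed.
Lemma mnm3_subU1 a b c : (mnm3 a b c - U_(I1))%MM = mnm3 a b.-1 c.
Proof. mnm3_tac. Qed.
Lemma mnm3_addU1 a b c : (mnm3 a b c + U_(I1))%MM = mnm3 a b.+1 c.
Proof. mnm3_tac. Qed.
Lemma mnm3_addU2 a b c : (mnm3 a b c + U_(I2))%MM = mnm3 a b c.+1.
Proof. mnm3_tac. Qed.

Lemma eq_mnm3 a b c a' b' c' :
  (mnm3 a b c == mnm3 a' b' c') = [&& a == a', b == b' & c == c'].
Proof.
apply/eqP/and3P => [/mnmP eq_m | [/eqP-> /eqP-> /eqP->]] //.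
by move: (eq_m I0) (eq_m I1) (eq_m I2); rewrite !mnmE /= => -> -> ->.
Qed.

Section Derivation.
Variable R : numDomainType.
Implicit Types p q : {mpoly R[3]}.

(* x d/dy + y d/dz, the derivative along the vector field N^T xi = (0, x, y) *)
Definition derNT p := p^`M(I1) * 'X_I0 + p^`M(I2) * 'X_I1.

Lemma derNT_is_linear : linear derNT.
Proof.
by move=> c p q; rewrite /derNT !linearP /= scalerDr !mulrDl -!scalerAl addrACA.
Qed.

HB.instance Definition _ :=
  GRing.isLinear.Build R {mpoly R[3]} {mpoly R[3]} _ derNT derNT_is_linear.

Lemma derNTM p q : derNT (p * q) = derNT p * q + p * derNT q.
Proof. rewrite /derNT !mderivM; ring. Qed.

Lemma derNT_X0 : derNT 'X_I0 = 0.
Proof. by rewrite /derNT !mderivXU /= !mul0r addr0. Qed.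

Lemma derNT_X1 : derNT 'X_I1 = 'X_I0.
Proof. by rewrite /derNT !mderivXU /= mul0r mul1r addr0. Qed.

Lemma derNT_X2 : derNT 'X_I2 = 'X_I1.
Proof. by rewrite /derNT !mderivXU /= mul0r mul1r add0r. Qed.

Lemma derNT1 : derNT 1 = 0.
Proof. by rewrite /derNT -mpolyC1 !mderivC !mul0r addr0. Qed.

Lemma derNT_exp_eq0 p k : derNT p = 0 -> derNT (p ^+ k) = 0.
Proof.
move=> Dp; elim: k => [|k IHk]; first by rewrite expr0 derNT1.
by rewrite exprS derNTM Dp IHk mul0r mulr0 addr0.
Qed.

Lemma mcoeff_derNT p a b c :
  (derNT p)@_(mnm3 a b c) =
  (if (0 < a)%N then p@_(mnm3 a.-1 b.+1 c) *+ b.+1 else 0) +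
  (if (0 < b)%N then p@_(mnm3 a b.-1 c.+1) *+ c.+1 else 0).
Proof.
rewrite /derNT mcoeffD !mcoeffMXU !mnmE /= mnm3_subU0 mnm3_subU1.
by rewrite !mcoeff_mderiv mnm3_addU1 mnm3_addU2 !mnmE /=; case: a b => [|a] [|b].
Qed.

(* The coefficient identities of [derNT p = 0] propagate vanishing first to
   the monomials with odd y-degree, then by induction on the z-degree. *)
Lemma derNT_eq0_coeff p :
  derNT p = 0 -> (forall a k, p@_(mnm3 a k.*2 0) = 0) -> p = 0.
Proof.
move=> Dp p_even.
have rec a b c : (if (0 < a)%N then p@_(mnm3 a.-1 b.+1 c) *+ b.+1 else 0) +
    (if (0 < b)%N then p@_(mnm3 a b.-1 c.+1) *+ c.+1 else 0) = 0.
  by rewrite -mcoeff_derNT Dp mcoeff0.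
have eq0_mulSn (x : R) n : x *+ n.+1 = 0 -> x = 0.
  by move/eqP; rewrite mulrn_eq0 => /eqP.
have p_odd k a c : p@_(mnm3 a k.*2.+1 c) = 0.
  elim: k a c => [|k IHk] a c.
    by have := rec a.+1 0%N c; rewrite /= addr0 => /eq0_mulSn.
  by have := rec a.+1 k.*2.+2 c; rewrite /= IHk mul0rn addr0 doubleS => /eq0_mulSn.
have p_all c a b : p@_(mnm3 a b c) = 0.
  elim: c a b => [|c IHc] a b.
    by rewrite -[b]odd_double_half; case: (odd b) => /=; rewrite ?p_odd ?p_even.
  case: a => [|a].
    by have := rec 0%N b.+1 c; rewrite /= add0r => /eq0_mulSn.
  by have := rec a.+1 b.+1 c; rewrite /= IHc mul0rn add0r => /eq0_mulSn.
by apply/mpolyP=> m; rewrite mcoeff0 (mnm3_eta m) p_all.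
Qed.

Lemma derNT_comp_mpoly n (q : {mpoly R[n]}) (t : n.-tuple {mpoly R[3]}) :
  (forall i, derNT (tnth t i) = 0) -> derNT (q \mPo t) = 0.
Proof.
move=> Dt; rewrite comp_mpolyE linear_sum big1 // => m _.
rewrite linearZ /= (_ : derNT _ = 0) ?scaler0 //.
elim/big_ind: _ => [|x y Dx Dy|i _]; last exact: derNT_exp_eq0.
  exact: derNT1.
by rewrite derNTM Dx Dy mul0r mulr0 addr0.
Qed.

End Derivation.

Arguments derNT {R}.

Section InvariantsOfNT.
Variable R : realType.
Implicit Types p : {mpoly R[3]}.

Lemma derNT_beta : derNT (beta R) = 0.
Proof.
rewrite /beta mulr_natl expr2 linearB raddfMn /= !derNTM.
by rewrite derNT_X0 derNT_X1 derNT_X2; ring.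
Qed.

Definition xbeta m j : {mpoly R[3]} := 'X_I0 ^+ (m - j.*2) * beta R ^+ j.

Lemma xbeta_comp m j :
  xbeta m j = ('X_0 ^+ (m - j.*2) * 'X_1 ^+ j) \mPo [tuple 'X_I0; beta R].
Proof. by rewrite rmorphM !rmorphXn /= !comp_mpolyXU. Qed.

Lemma derNT_comp_xbeta (q : {mpoly R[2]}) :
  derNT (q \mPo [tuple 'X_I0; beta R]) = 0.
Proof.
apply: derNT_comp_mpoly => -[[|[|//]] ?].
  by rewrite (tnth_nth 0) /= derNT_X0.
by rewrite (tnth_nth 0) /= derNT_beta.
Qed.

Lemma derNT_xbeta m j : derNT (xbeta m j) = 0.
Proof. by rewrite xbeta_comp derNT_comp_xbeta. Qed.

Lemma beta_homog : beta R \is 2.-homog.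
Proof.
rewrite /beta mulr_natl rpredB ?rpredMn //.
  exact: dhomogM (mpolyXU_homog _) (mpolyXU_homog _).
exact: dhomogMn 2 (mpolyXU_homog _).
Qed.

Lemma xbeta_homog m j : (j.*2 <= m)%N -> xbeta m j \is m.-homog.
Proof.
move=> le_2j_m.
have := dhomogM (dhomogMn (m - j.*2) (@mpolyXU_homog _ R I0)) (dhomogMn j beta_homog).
by rewrite mul1n mulnC muln2 subnK.
Qed.

(* Only the -y^2 part of beta contributes to monomials free of z. *)
Lemma mcoeff_X0beta a j x y :
  ('X_I0 ^+ a * beta R ^+ j)@_(mnm3 x y 0) =
  if (x == a) && (y == j.*2) then (-1) ^+ j else 0.
Proof.
elim: j x y => [|j IHj] x y.
  rewrite expr0 mulr1 mcoeffXn.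
  have -> : (U_(I0) *+ a)%MM = mnm3 a 0 0 by mnm3_tac.
  by rewrite eq_mnm3 eqxx andbT /= [y == _]eq_sym [x == _]eq_sym; case: (_ && _).
have -> : 'X_I0 ^+ a * beta R ^+ j.+1 =
   ('X_I0 ^+ a * beta R ^+ j * 'X_I2 * 'X_I0) *+ 2
   - 'X_I0 ^+ a * beta R ^+ j * 'X_I1 * 'X_I1.
  by rewrite exprS /beta; ring.
rewrite mcoeffB mcoeffMn !mcoeffMXU !mnm3_subU0 !mnm3_subU1 !mnmE /=.
rewrite if_same mul0rn sub0r; case: y => [|[|y]] /=; rewrite ?oppr0 ?andbF //.
rewrite IHj doubleS !eqSS; case: (_ && _); last by rewrite oppr0.
by rewrite exprS mulN1r.
Qed.

Lemma mcoeff_sum_xbeta {m} (c : 'I_(uphalf m.+1) -> R) (i : 'I_(uphalf m.+1)) :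
  (\sum_j c j *: xbeta m j)@_(mnm3 (m - i.*2) i.*2 0) = (-1) ^+ i * c i.
Proof.
rewrite raddf_sum (bigD1 i) //= big1 => [|j ne_ji].
  by rewrite mcoeffZ mcoeff_X0beta !eqxx addr0 mulrC.
have /negbTE ne_ij : (i : nat) != j by rewrite eq_sym; exact: ne_ji.
by rewrite mcoeffZ mcoeff_X0beta (can_eq doubleK) ne_ij andbF mulr0.
Qed.

Lemma xbeta_free m (c : 'I_(uphalf m.+1) -> R) :
  \sum_j c j *: xbeta m j = 0 -> forall i, c i = 0.
Proof.
move=> sum0 i; have := mcoeff_sum_xbeta c i; rewrite sum0 mcoeff0 => /esym/eqP.
by rewrite mulf_eq0 signr_eq0 => /eqP.
Qed.

Definition xbeta_coef m p (j : nat) := (-1) ^+ j * p@_(mnm3 (m - j.*2) j.*2 0).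

Lemma sum_xbeta_homog m (c : 'I_(uphalf m.+1) -> R) :
  \sum_j c j *: xbeta m j \is m.-homog.
Proof.
apply: rpred_sum => j _; apply/rpredZ/xbeta_homog.
by rewrite -ltnS -gtn_uphalf_double.
Qed.

Lemma derNT_sum_xbeta m (c : 'I_(uphalf m.+1) -> R) :
  derNT (\sum_j c j *: xbeta m j) = 0.
Proof. by rewrite linear_sum big1 // => j _; rewrite linearZ /= derNT_xbeta scaler0. Qed.

Lemma derNT_ker_homogE {m p} : p \is m.-homog -> derNT p = 0 ->
  p = \sum_(j < uphalf m.+1) xbeta_coef m p j *: xbeta m j.
Proof.
move=> p_homog Dp; apply/eqP; rewrite -subr_eq0; apply/eqP.
apply: derNT_eq0_coeff => [|a k]; first by rewrite linearB /= Dp derNT_sum_xbeta subrr.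
have [def_m | ne_deg] := eqVneq (a + k.*2)%N m.
  have lt_k : (k < uphalf m.+1)%N by rewrite gtn_uphalf_double ltnS -def_m leq_addl.
  have -> : a = (m - k.*2)%N by rewrite -def_m addnK.
  by rewrite mcoeffB (mcoeff_sum_xbeta _ (Ordinal lt_k)) signrMK subrr.
have ne_mdeg : mdeg (mnm3 a k.*2 0) != m by rewrite mdeg_mnm3 addn0.
apply: (dhomog_nemf_coeff _ ne_mdeg).
by rewrite rpredB // sum_xbeta_homog.
Qed.

Lemma derNT_ker_poly_in_x_beta m p :
  p \is m.-homog -> derNT p = 0 -> poly_in_x_beta p.
Proof.
move=> p_homog Dp; rewrite (derNT_ker_homogE p_homog Dp).
exists (\sum_(j < uphalf m.+1) xbeta_coef m p j *: ('X_0 ^+ (m - j.*2) * 'X_1 ^+ j)).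
by rewrite linear_sum; apply: eq_bigr => j _; rewrite linearZ xbeta_comp.
Qed.

End InvariantsOfNT.

Section VectorFields.
Variable R : realType.
Implicit Types (p : {mpoly R[3]}) (A : 'M[R]_3).

Definition mul_xi p : vf R := [ffun i => p * 'X_i].

Lemma mul_xi_is_linear : linear mul_xi.
Proof.
by move=> c p q; apply/ffunP=> i; rewrite !ffunE mulrDl scalerAl.
Qed.

HB.instance Definition _ :=
  GRing.isLinear.Build R {mpoly R[3]} (vf R) _ mul_xi mul_xi_is_linear.

Lemma mul_xi_lincomb n (c : 'I_n -> R) (F : 'I_n -> {mpoly R[3]}) :
  mul_xi (\sum_i c i *: F i) = \sum_i c i *: mul_xi (F i).
Proof. by rewrite linear_sum; apply: eq_bigr => i _; rewrite linearZ. Qed.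

Lemma mul_xi_eq0 p : (mul_xi p == 0) = (p == 0).
Proof.
apply/eqP/eqP => [/ffunP/(_ 0%R)|->]; last by rewrite linear0.
rewrite /mul_xi !ffunE => /eqP; rewrite mulf_eq0 => /orP[/eqP //|/eqP].
by move/(congr1 (mcoeff U_(I0))); rewrite mcoeffXU mcoeff0 eqxx => /eqP; rewrite oner_eq0.
Qed.

Definition lie_deriv A p := \sum_(j < 3) p^`M(j) * (\sum_(k < 3) A j k *: 'X_k).

Lemma ad_mul_xi A p : ad A (mul_xi p) = mul_xi (lie_deriv A p).
Proof.
apply/ffunP=> i; rewrite /ad /mul_xi !ffunE.
under eq_bigr do rewrite mderivM mderivXU mulrDl.
under [X in _ - X]eq_bigr do rewrite ffunE scalerAr.
rewrite big_split /= -mulr_sumr [X in _ + X - _](bigD1 i) //= eqxx mulr1.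
rewrite [X in _ + (_ + X) - _]big1 => [|j]; last first.
  by rewrite eq_sym => /negbTE->; rewrite mulr0 mul0r.
by rewrite addr0 addrK /lie_deriv mulr_suml; apply: eq_bigr => j _; rewrite mulrAC.
Qed.

Lemma lie_deriv_NmatT p : lie_deriv (Nmat R)^T p = derNT p.
Proof.
rewrite /lie_deriv /derNT !big_ord_recl !big_ord0 !mxE /=.
have -> : lift ord0 (lift ord0 ord0) = 2%R :> 'I_3 by apply/val_inj.
have -> : lift ord0 ord0 = 1%R :> 'I_3 by apply/val_inj.
by rewrite !scale0r !scale1r !addr0 !add0r mulr0 add0r.
Qed.

Lemma ker_adNstar_mul_xi p : ker_adNstar (mul_xi p) <-> derNT p = 0.
Proof.
rewrite /ker_adNstar ad_mul_xi lie_deriv_NmatT.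
by split=> [/eqP|->]; [rewrite mul_xi_eq0 => /eqP | exact: linear0].
Qed.

Lemma ker_adNstar_U3P m (h : vf R) :
  ker_adNstar h /\ U3 m.+1 h <->
  exists p, [/\ p \is m.-homog, derNT p = 0 & h = mul_xi p].
Proof.
split=> [[ker_h [p [p_homog def_h]]]|[p [p_homog Dp ->]]].
  by move: ker_h; rewrite def_h -/(mul_xi p) ker_adNstar_mul_xi => Dp; exists p.
by split; [apply/ker_adNstar_mul_xi | exists p].
Qed.

End VectorFields.

Arguments mul_xi {R}.

Theorem lemma9 (R : realType) (d : nat) (hd : (1 <= d)%N) :
  (forall h : vf R,
     (ker_adNstar h /\ U3 d h) <->
     (exists theta : {mpoly R[3]},
        [/\ theta \is (d.-1).-homog, poly_in_x_beta theta &
            h = [ffun i => theta * 'X_i]])) /\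
  (exists b : 'I_(uphalf d) -> vf R,
     (forall c : 'I_(uphalf d) -> R,
        \sum_(i < uphalf d) c i *: b i = 0 -> forall i, c i = 0) /\
     (forall h : vf R,
        (ker_adNstar h /\ U3 d h) <->
        (exists c : 'I_(uphalf d) -> R, h = \sum_(i < uphalf d) c i *: b i))).
Proof.
case: d hd => // m _.
split=> [h|].
  rewrite ker_adNstar_U3P; split=> [[p [p_homog Dp ->]]|[p [p_homog [q def_p] ->]]].
    by exists p; split=> //; apply: derNT_ker_poly_in_x_beta p_homog Dp.
  by exists p; split=> //; rewrite def_p derNT_comp_xbeta.
exists (fun j => mul_xi (xbeta R m j)); split.
  by move=> c; rewrite -mul_xi_lincomb => /eqP; rewrite mul_xi_eq0 => /eqP /xbeta_free.
move=> h; rewrite ker_adNstar_U3P; split=> [[p [p_homog Dp ->]]|[c ->]].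
  exists (fun j => xbeta_coef R m p j).
  by rewrite -mul_xi_lincomb -derNT_ker_homogE.
exists (\sum_j c j *: xbeta R m j).
by rewrite -mul_xi_lincomb; split; [apply: sum_xbeta_homog | apply: derNT_sum_xbeta |].
Qed.
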